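(* Let $q$ be a prime power and let $n,k,r$ be integers with $3\le k\le n-2\le q-2$ and $1\le r\le k-1$. Let $\alpha_1,\dots,\alpha_n\in\mathbb{F}_q$ be pairwise distinct. Let $C_{k-r,k-r-1}$ be the linear code generated by the $k\times n$ matrix $G_{k-r,k-r-1}$ whose rows are $(\alpha_1^{e},\dots,\alpha_n^{e})$ for $e=0,1,\dots,k-r-2$ and $e=k-r+1,k-r+2,\dots,k+1$. Then $C_{k-r,k-r-1}$ is MDS if and only if $$\sigma_{r+1}(\beta_1,\dots,\beta_k)^2-\sigma_r(\beta_1,\dots,\beta_k)\,\sigma_{r+2}(\beta_1,\dots,\beta_k)\neq 0$$ for every $k$-element subset $\{\beta_1,\dots,\beta_k\}\subseteq\{\alpha_1,\dots,\alpha_n\}$ (with distinct $\beta_i$).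
   Context: Convention: $0^0=1$. $\sigma_t(x_1,\dots,x_m)$ is the $t$-th elementary symmetric polynomial, with $\sigma_0=1$ and $\sigma_t=0$ for $t>m$. A linear code is MDS if its parameters $[n,k,d]$ satisfy $d=n-k+1$. *)

From HB Require Import structures.
From mathcomp Require Import all_boot all_order all_algebra all_field.
Set Implicit Arguments. Unset Strict Implicit. Unset Printing Implicit Defensive.
Import Order.TTheory GRing.Theory Num.Theory.
Local Open Scope ring_scope.

Definition wt (F : fieldType) (n : nat) (c : 'rV[F]_n) : nat :=
  #|[set i : 'I_n | c 0 i != 0]|.

(* The linear code generated by G is its row space; a codeword c satisfies (c <= G)%MS. *)
Definition min_dist (F : finFieldType) (m n : nat) (G : 'M[F]_(m, n)) : nat :=
  \big[minn/n]_(c : 'rV[F]_n | (c <= G)%MS && (c != 0)) wt c.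

Definition is_MDS (F : finFieldType) (m n : nat) (G : 'M[F]_(m, n)) : Prop :=
  min_dist G = (n - \rank G + 1)%N.

Definition elsym (F : fieldType) (n : nat) (a : 'I_n -> F) (S : {set 'I_n}) (t : nat) : F :=
  \sum_(T : {set 'I_n} | (T \subset S) && (#|T| == t)) \prod_(i in T) a i.

(* exponent of row i of G_{k-r,k-r-1}: 0..k-r-2, then k-r+1..k+1 *)
Definition gexp (k r : nat) (i : nat) : nat :=
  if (i < k - r - 1)%N then i else (i + 2)%N.

Definition Gmat (F : fieldType) (n k r : nat) (alpha : 'I_n -> F) : 'M[F]_(k, n) :=
  \matrix_(i < k, j < n) alpha j ^+ gexp k r i.

(* A codeword [v *m Gmat k r alpha] lists the values at the [alpha j] of
   [f = \sum_i v_i X^(gexp k r i)], and such [f] are exactly the polynomials of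
   degree at most k+1 whose coefficients at the gap m = k-r-1 and m+1 vanish.
   The code is MDS iff no nonzero codeword vanishes on a k-set S.  Such an [f]
   is a multiple (q_0 + q_1 X) P_S of P_S = \prod_(i in S) (X - alpha_i), and the
   two gap conditions form a 2x2 linear system in (q_0, q_1) of determinant
   P_m^2 - P_(m+1) P_(m-1), which by Vieta's formulas is
   sigma_(r+1)^2 - sigma_r sigma_(r+2). *)

From HB Require Import structures.
From mathcomp Require Import all_boot all_order all_algebra all_field.
From mathcomp Require Import zify ring.
Import Order.TTheory GRing.Theory.
Set Implicit Arguments.
Unset Strict Implicit.
Unset Printing Implicit Defensive.
Local Open Scope ring_scope.

Section MinimumDistance.
Variables (F : finFieldType) (m n : nat) (G : 'M[F]_(m, n)).

Lemma min_dist_le {c : 'rV[F]_n} : (c <= G)%MS -> c != 0 -> (min_dist G <= wt c)%N.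
Proof.
move=> cG c0; rewrite /min_dist -minEnat -leEnat.
by apply: bigmin_le_cond; rewrite cG.
Qed.

Lemma wt_le_zeros {c : 'rV[F]_n} {S : {set 'I_n}} :
  {in S, forall j, c 0 j = 0} -> (wt c <= n - #|S|)%N.
Proof.
move=> cS; have := cardsC S; rewrite card_ord => {2}<-; rewrite addKn.
apply/subset_leq_card/subsetP => j; rewrite !inE.
by apply: contra => jS; rewrite cS.
Qed.

Hypothesis G_free : row_free G.

Lemma codeword_neq0 {v : 'rV[F]_m} : v != 0 -> v *m G != 0.
Proof. by apply: contraNneq; rewrite -(mul0mx 1 G) => /(row_free_inj G_free) ->. Qed.

Lemma singleton_bound : (0 < m <= n)%N -> (min_dist G <= n - m + 1)%N.
Proof.
case/andP => m_gt0 le_mn; have le_m1n : (m.-1 <= n)%N by lia.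
pose H := colsub (widen_ord le_m1n) G.
have /rowV0Pn [v /sub_kermxP vH v0] : kermx H != 0.
  by rewrite kermx_eq0; apply/negP => /eqP rkH; have := rank_leq_col H; lia.
pose S := [set widen_ord le_m1n j | j : 'I_m.-1].
have cS : #|S| = m.-1.
  by rewrite card_imset ?card_ord // => j1 j2 [] /val_inj.
have vG_S : {in S, forall j, (v *m G) 0 j = 0}.
  move=> _ /imsetP[j _ ->].
  by have /rowP/(_ j) := vH; rewrite mulmx_colsub !mxE.
have := leq_trans (min_dist_le (submxMl v G) (codeword_neq0 v0)) (wt_le_zeros vG_S).
by rewrite cS; lia.
Qed.

Lemma is_MDS_iff_no_vanishing : (0 < m <= n)%N ->
  is_MDS G <-> forall S : {set 'I_n}, #|S| = m ->
    ~ exists2 v : 'rV[F]_m, v != 0 & {in S, forall j, (v *m G) 0 j = 0}.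
Proof.
move=> mn; rewrite /is_MDS (eqP G_free); split=> [MDS S cS [v v0 vS] | noZ].
  have := leq_trans (min_dist_le (submxMl v G) (codeword_neq0 v0)) (wt_le_zeros vS).
  by rewrite MDS cS; lia.
apply/eqP; rewrite eqn_leq singleton_bound //=.
rewrite /min_dist -minEnat -leEnat; apply: le_bigmin => [|c /andP[/submxP[v ->] c0]].
  by rewrite leEnat; lia.
have v0 : v != 0 by apply: contraNneq c0 => ->; rewrite mul0mx.
rewrite leEnat leqNgt; apply/negP => low.
pose Z := [set j | (v *m G) 0 j == 0].
have /card_geqP [s [s_uniq s_size sZ]] : (m <= #|Z|)%N.
  have wZ : #|~: Z| = wt (v *m G) by apply: eq_card => j; rewrite !inE.
  have := cardsC Z; rewrite card_ord; move: low; rewrite -wZ.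
  by case/andP: mn; lia.
apply: (noZ [set j in s]); first by rewrite cardsE (card_uniqP s_uniq).
by exists v => // j; rewrite inE => /sZ; rewrite inE => /eqP.
Qed.

End MinimumDistance.

Section NodePolynomial.
Variables (F : fieldType) (n : nat) (a : 'I_n -> F).

Definition node_poly (S : {set 'I_n}) : {poly F} := \prod_(i in S) ('X - (a i)%:P).

Lemma node_polyE (S : {set 'I_n}) :
  node_poly S = \prod_(z <- [seq a i | i <- enum S]) ('X - z%:P).
Proof. by rewrite big_map big_enum. Qed.

Lemma size_node_poly (S : {set 'I_n}) : size (node_poly S) = #|S|.+1.
Proof. by rewrite node_polyE size_prod_XsubC size_map -cardE. Qed.

Lemma node_poly_monic (S : {set 'I_n}) : node_poly S \is monic.
Proof. by rewrite node_polyE monic_prod_XsubC. Qed.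

Lemma node_poly_root (S : {set 'I_n}) j : j \in S -> (node_poly S).[a j] = 0.
Proof. by move=> jS; rewrite horner_prod (bigD1 j) //= hornerXsubC subrr mul0r. Qed.

Lemma node_poly_dvd (S : {set 'I_n}) (f : {poly F}) : injective a ->
  {in S, forall j, f.[a j] = 0} -> exists q, f = q * node_poly S.
Proof.
move=> a_inj fS; rewrite node_polyE; apply: uniq_roots_prod_XsubC.
  by apply/allP => _ /mapP[j jS ->]; rewrite rootE fS // -mem_enum.
by rewrite uniq_rootsE map_inj_uniq // enum_uniq.
Qed.

Lemma elsym_gt_card (S : {set 'I_n}) t : (#|S| < t)%N -> elsym a S t = 0.
Proof.
move=> lt_S_t; rewrite /elsym big1 // => T /andP[/subset_leq_card le_T_S /eqP cT].
by move: le_T_S lt_S_t; rewrite cT; lia.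
Qed.

Lemma coef_node_poly (S : {set 'I_n}) j : (j <= #|S|)%N ->
  (node_poly S)`_j = (-1) ^+ (#|S| - j) * elsym a S (#|S| - j).
Proof.
move=> le_j_S; rewrite /node_poly big_mkcond /=.
(* Expand the product: the term indexed by T picks [-a_i] on T and X on S :\: T. *)
rewrite (eq_bigr (fun i =>
    (if i \in S then - (a i)%:P else 0) + (if i \in S then 'X else 1))); last first.
  by move=> i _; case: (i \in S); [rewrite addrC | rewrite add0r].
rewrite bigA_distr coef_sum /elsym mulr_sumr [RHS]big_mkcond /=.
apply: eq_bigr => T _.
case: (boolP (T \subset S)) => /= [sTS | /subsetPn[i iT iS]]; last first.
  by rewrite (bigD1 i) //= iT (negbTE iS) mul0r coef0.
rewrite (bigID (mem T)) /= (eq_bigr (fun i => (- a i)%:P)); last first.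
  by move=> i iT; rewrite iT (subsetP sTS _ iT) polyCN.
rewrite [X in _ * X](eq_bigr (fun i => if i \in S then 'X else 1)); last first.
  by move=> i /negbTE ->.
rewrite -big_mkcondr /= [X in _ * X](eq_bigl (mem (S :\: T))); last first.
  by move=> i; rewrite !inE.
rewrite prodr_const -rmorph_prod coefCM coefXn cardsD (setIidPr sTS) prodrN.
have le_T_S := subset_leq_card sTS.
have -> : (j == #|S| - #|T|)%N = (#|T| == #|S| - j)%N by apply/eqP/eqP; lia.
by case: eqP => [->|_]; rewrite ?mulr1 ?mulr0.
Qed.

End NodePolynomial.

Lemma linear_multiple_coefs_eq0_iff (F : fieldType) (p : {poly F}) j :
  (exists2 q : {poly F}, q != 0 &
     [/\ (size q <= 2)%N, (q * p)`_j = 0 & (q * p)`_j.+1 = 0])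
  <-> p`_j ^+ 2 - p`_j.+1 * ('X * p)`_j = 0.
Proof.
(* (q * p)_t = q_0 p_t + q_1 (X p)_t: for q of coefficient vector w the two
   conditions say [w *m M = 0]. *)
pose M : 'M[F]_2 := \matrix_(i, l) ('X^i * p)`_(j + l).
have coef_mulM (w : 'rV[F]_2) (l : 'I_2) : (w *m M) 0 l = (rVpoly w * p)`_(j + l).
  rewrite {2}[w]row_sum_delta linear_sum mulr_suml coef_sum mxE.
  by apply: eq_bigr => i _; rewrite linearZ /= rVpoly_delta -scalerAl coefZ mxE.
have detM : \det M = p`_j ^+ 2 - p`_j.+1 * ('X * p)`_j.
  rewrite (expand_det_row _ 0) !big_ord_recl big_ord0 /cofactor !det_mx11 !mxE /=.
  rewrite /bump /= !addn0 add0n addn1 expr0 expr1 !mul1r mulN1r coefXM /= addr0.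
  by rewrite mulrN expr2.
rewrite -detM; split=> [[q q0 [size_q qj qj1]] | /eqP/det0P[w w0 wM]].
  apply/eqP/det0P; exists (poly_rV q).
    by apply: contraNneq q0 => q0; rewrite -(poly_rV_K size_q) q0 linear0.
  apply/rowP => l; rewrite coef_mulM poly_rV_K // mxE.
  by case: l => [[|[|//]] ?] /=; rewrite ?addn0 ?addn1.
exists (rVpoly w); first by apply: contraNneq w0 => w0; rewrite -[w]rVpolyK w0 linear0.
split; first exact: size_poly.
  by have := coef_mulM w 0; rewrite wM mxE addn0.
by have := coef_mulM w 1; rewrite wM mxE addn1.
Qed.

Section GmatCode.
Variables (F : fieldType) (n k r : nat) (alpha : 'I_n -> F).

Local Notation gap := (k - r - 1)%N.
Local Notation e := (gexp k r).

Lemma gexp_inj : injective e.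
Proof. by move=> i j; rewrite /gexp; case: (ltnP i gap); case: (ltnP j gap); lia. Qed.

Lemma gexp_neq_gap i : e i != gap.
Proof. by rewrite /gexp; case: (ltnP i gap) => ?; apply/eqP; lia. Qed.

Lemma gexp_neq_gapS i : e i != gap.+1.
Proof. by rewrite /gexp; case: (ltnP i gap) => ?; apply/eqP; lia. Qed.

Lemma gexp_lt (i : 'I_k) : (e i < k + 2)%N.
Proof. by rewrite /gexp; case: (ltnP i gap) => ?; have := ltn_ord i; lia. Qed.

Lemma gexp_onto {j} : (j < k + 2)%N -> j != gap -> j != gap.+1 -> exists i : 'I_k, e i = j.
Proof.
move=> lt_j /eqP j_gap /eqP j_gapS; have [lt_j_gap | le_gap_j] := ltnP j gap.
  have lt_j_k : (j < k)%N by lia.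
  by exists (Ordinal lt_j_k); rewrite /gexp /= lt_j_gap.
have lt_j2_k : (j - 2 < k)%N by lia.
exists (Ordinal lt_j2_k); rewrite /gexp /=.
by case: ltnP => ?; lia.
Qed.

Definition gpoly (v : 'rV[F]_k) : {poly F} := \sum_(i < k) v 0 i *: 'X^(e i).

Lemma coef_gpoly v j : (gpoly v)`_j = \sum_(i < k) v 0 i * (j == e i)%:R.
Proof. by rewrite coef_sum; apply: eq_bigr => i _; rewrite coefZ coefXn. Qed.

Lemma coef_gpoly_gexp v (i : 'I_k) : (gpoly v)`_(e i) = v 0 i.
Proof.
rewrite coef_gpoly (bigD1 i) //= eqxx mulr1 big1 ?addr0 // => l li.
by rewrite (inj_eq gexp_inj) eq_sym val_eqE (negbTE li) mulr0.
Qed.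

Lemma coef_gpoly_gap v j : (forall i : 'I_k, e i != j) -> (gpoly v)`_j = 0.
Proof.
by move=> e_j; rewrite coef_gpoly big1 // => i _; rewrite eq_sym (negbTE (e_j i)) mulr0.
Qed.

Lemma size_gpoly v : (size (gpoly v) <= k + 2)%N.
Proof.
apply/leq_sizeP => j le_j; apply: coef_gpoly_gap => i.
by apply: contraTneq le_j => <-; rewrite -ltnNge gexp_lt.
Qed.

Lemma gpoly_eq0 v : (gpoly v == 0) = (v == 0).
Proof.
apply/eqP/eqP => [v0 | ->]; last by rewrite /gpoly big1 // => i _; rewrite mxE scale0r.
by apply/rowP => i; rewrite -coef_gpoly_gexp v0 coef0 mxE.
Qed.

Lemma gpoly_onto (f : {poly F}) : (size f <= k + 2)%N -> f`_gap = 0 -> f`_gap.+1 = 0 ->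
  exists v, gpoly v = f.
Proof.
move=> size_f f_gap f_gapS; exists (\row_i f`_(e i)); apply/polyP => j.
have [/existsP[i /eqP <-] | /existsPn e_j] := boolP [exists i : 'I_k, e i == j].
  by rewrite coef_gpoly_gexp mxE.
rewrite coef_gpoly_gap //.
have [->|j_gap] := eqVneq j gap; first by rewrite f_gap.
have [->|j_gapS] := eqVneq j gap.+1; first by rewrite f_gapS.
have [lt_j | le_j] := ltnP j (k + 2); last by rewrite nth_default // (leq_trans size_f).
by have [i ei] := gexp_onto lt_j j_gap j_gapS; have := e_j i; rewrite ei eqxx.
Qed.

Lemma Gmat_mulE v j : (v *m Gmat k r alpha) 0 j = (gpoly v).[alpha j].
Proof.
rewrite !mxE horner_sum; apply: eq_bigr => i _.
by rewrite !mxE hornerZ hornerXn.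
Qed.

Hypothesis alpha_inj : injective alpha.

Lemma row_free_Gmat : (k + 2 <= n)%N -> row_free (Gmat k r alpha).
Proof.
move=> le_k2_n; rewrite -kermx_eq0; apply/rowV0P => v /sub_kermxP vG0.
apply/eqP; rewrite -gpoly_eq0; apply/eqP.
apply: (@roots_geq_poly_eq0 _ _ [seq alpha j | j <- enum 'I_n]).
- by apply/allP => _ /mapP[j _ ->]; rewrite rootE -Gmat_mulE vG0 mxE.
- by rewrite map_inj_uniq // enum_uniq.
- by rewrite size_map size_enum_ord (leq_trans (size_gpoly v)).
Qed.

Lemma elsym_discr_node_poly (S : {set 'I_n}) : #|S| = k -> (r < k)%N ->
  let P := node_poly alpha S in
  elsym alpha S r.+1 ^+ 2 - elsym alpha S r * elsym alpha S r.+2 =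
  P`_gap ^+ 2 - P`_gap.+1 * ('X * P)`_gap.
Proof.
move=> cS lt_r_k P.
set s0 := elsym alpha S r; set s1 := elsym alpha S r.+1; set s2 := elsym alpha S r.+2.
have P_gap : P`_gap = (-1) ^+ r.+1 * s1.
  by rewrite coef_node_poly cS; [have -> : (k - gap = r.+1)%N by lia | lia].
have P_gapS : P`_gap.+1 = (-1) ^+ r * s0.
  by rewrite coef_node_poly cS; [have -> : (k - gap.+1 = r)%N by lia | lia].
have XP_gap : ('X * P)`_gap = (-1) ^+ r.+2 * s2.
  rewrite coefXM; case: eqP => [gap0 | gap_neq0].
    by rewrite /s2 elsym_gt_card ?mulr0 // cS; lia.
  by rewrite coef_node_poly cS; [have -> : (k - gap.-1 = r.+2)%N by lia | lia].
have sign2 : (-1) ^+ r * (-1) ^+ r = 1 :> F.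
  by rewrite -exprD addnn -mul2n exprM sqrrN !expr1n.
transitivity ((-1) ^+ r * (-1) ^+ r * (s1 ^+ 2 - s0 * s2)); first by rewrite sign2 mul1r.
by rewrite P_gap P_gapS XP_gap !exprS; ring.
Qed.

Lemma Gmat_vanishing_iff_discr (S : {set 'I_n}) : #|S| = k -> (r < k)%N ->
  (exists2 v : 'rV[F]_k, v != 0 & {in S, forall j, (v *m Gmat k r alpha) 0 j = 0})
  <-> elsym alpha S r.+1 ^+ 2 - elsym alpha S r * elsym alpha S r.+2 = 0.
Proof.
move=> cS lt_r_k; rewrite elsym_discr_node_poly // -linear_multiple_coefs_eq0_iff.
set P := node_poly alpha S.
have size_mulP q : q != 0 -> size (q * P) = (size q + k)%N.
  by move=> q0; rewrite size_Mmonic ?node_poly_monic // size_node_poly cS addnS.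
split=> [[v v0 vS] | [q q0 [size_q qP_gap qP_gapS]]].
  have [q gvE] : exists q, gpoly v = q * P.
    by apply: node_poly_dvd => // j /vS; rewrite Gmat_mulE.
  have q0 : q != 0.
    by apply: contraNneq v0 => q0; rewrite -gpoly_eq0 gvE q0 mul0r.
  exists q => //; rewrite -gvE; split.
  - by have := size_gpoly v; rewrite gvE size_mulP //; lia.
  - exact: coef_gpoly_gap gexp_neq_gap.
  - exact: coef_gpoly_gap gexp_neq_gapS.
have [v gvE] : exists v, gpoly v = q * P.
  by apply: gpoly_onto => //; rewrite size_mulP //; lia.
exists v; first by rewrite -gpoly_eq0 gvE mulf_eq0 negb_or q0 monic_neq0 ?node_poly_monic.
by move=> j jS; rewrite Gmat_mulE gvE hornerM node_poly_root // mulr0.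
Qed.

End GmatCode.

Theorem theorem3p11 (F : finFieldType) (n k r : nat) (alpha : 'I_n -> F) :
  (3 <= k)%N -> (k <= n - 2)%N -> (n - 2 <= #|F| - 2)%N ->
  (1 <= r)%N -> (r <= k - 1)%N ->
  injective alpha ->
  is_MDS (Gmat k r alpha) <->
  (forall S : {set 'I_n}, #|S| = k ->
     elsym alpha S r.+1 ^+ 2 - elsym alpha S r * elsym alpha S r.+2 != 0).
Proof.
move=> k_ge3 k_le_n2 _ _ r_le_k1 alpha_inj.
have le_k2_n : (k + 2 <= n)%N by lia.
have lt_r_k : (r < k)%N by lia.
rewrite is_MDS_iff_no_vanishing ?row_free_Gmat //; last by apply/andP; split; lia.
split=> [noZ S cS | discr_neq0 S cS].
  by apply/eqP => /(Gmat_vanishing_iff_discr alpha_inj cS lt_r_k); apply: noZ.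
by move/(Gmat_vanishing_iff_discr alpha_inj cS lt_r_k)/eqP; apply/negP/discr_neq0.
Qed.
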